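(* Let $(q_l)_{l\ge1}$ be positive numbers with $q_1=1$ and $0<R:=\lim_{l\to\infty}q_l/q_{l+1}<\infty$, and assume (NEQ): $\tilde f(1)<1$, or $\tilde f(1)=1$ and $\tilde g(1)=\infty$. Let $\rho^*>0$ and let $(z^{(m)})_{m\ge1}\subset X_{0+}$ with $\rho(z^{(m)})=\rho^*$ for all $m$ be a minimizing sequence for $\inf\{\tilde A(z): z\in X_{0+},\ \rho(z)=\rho^*\}$. Then $z^{(m)}\to0$ weak-$*$ in $X$ as $m\to\infty$, i.e. $z^{(m)}_l\to0$ for every $l\in\mathbb{N}$.
   Context: $X=\{z=(z_l)_{l\ge1}:\sum_l l|z_l|<\infty\}$ with norm $\|z\|_X=\sum_l l|z_l|$, $X_{0+}$ its nonnegative elements, $\rho(z)=\sum_l lz_l$, $N(z)=\sum_l z_l$. $X$ is the dual of $\{z: z_l/l\to0\}$; a norm-bounded sequence in $X$ converges weak-$*$ iff it converges componentwise. $\tilde q_l=q_lR^l$, $\tilde f(\mu)=\sum_{l\ge1}\tilde q_l\mu^l$, $\tilde g(\mu)=\sum_{l\ge1}l\tilde q_l\mu^l$, $\tilde f(1)=\sum_l\tilde q_l$, $\tilde g(1)=\sum_l l\tilde q_l$ (values in $(0,\infty]$). For $z\in X_{0+}\setminus\{0\}$, $\tilde A(z)=\sum_l z_l\ln\big(z_l/(\tilde q_lN(z))\big)$ with $0\ln0=0$, and $\tilde A(0)=0$. *)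

From Stdlib Require Import Reals.
From Coquelicot Require Import Coquelicot.
Open Scope R_scope.

(* Convention: a sequence (z_l)_{l>=1} is represented by z : nat -> R,
   where z l is z_l for l >= 1; the entry z 0 is required to be 0 for
   elements of X (so sums over all of nat are sums over l >= 1). *)

Definition in_X0plus (z : nat -> R) : Prop :=
  z O = 0 /\ (forall l, 0 <= z l) /\ ex_series (fun l => INR l * Rabs (z l)).

Definition rho (z : nat -> R) : R := Series (fun l => INR l * z l).

Definition Nz (z : nat -> R) : R := Series z.

Definition qt (q : nat -> R) (Rr : R) (l : nat) : R := q l * Rr ^ l.

(* tilde f(1) = sum_{l>=1} tilde q_l and tilde g(1) = sum_{l>=1} l tilde q_l,
   as values in (0, +oo] (limits of nondecreasing partial sums) *)
Definition ft1 (q : nat -> R) (Rr : R) : Rbar :=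
  Lim_seq (fun n => sum_n_m (qt q Rr) 1 n).
Definition gt1 (q : nat -> R) (Rr : R) : Rbar :=
  Lim_seq (fun n => sum_n_m (fun l => INR l * qt q Rr l) 1 n).

Definition xlog (x c : R) : R :=
  if Req_EM_T x 0 then 0 else x * ln (x / c).

Definition Atilde (q : nat -> R) (Rr : R) (z : nat -> R) : R :=
  Series (fun l => xlog (z l) (qt q Rr l * Nz z)).

From Stdlib Require Import Reals Lra Lia.
From Coquelicot Require Import Coquelicot.
Open Scope R_scope.

(* Spreading the mass [rhostar] on the single size [L] costs
   [- (rhostar / L) ln qt_L], which tends to 0 because [qt_l / qt_(l+1) -> 1];
   hence the infimum is at most 0.  Conversely, Gibbs' inequality against the
   tilted weights [qt_l exp (- t l)], together with [exp (- x) <= 1 - x / 2]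
   on [0, 1], gives for [t n <= 1]
     [Atilde z >= N z (1 - f(1)) + t (N z / 2 * sum_(l <= n) l qt_l - rho z)].
   Under (NEQ) either [f(1) < 1] (take [t = 0]) or [f(1) = 1] with unbounded
   truncated moments (take [t = 1 / n], [n] large); either way [Atilde z] is
   bounded away from 0 once [N z] is.  Along a minimizing sequence [N z^(m)]
   thus tends to 0, and it dominates every component. *)

Lemma is_series_le (a b : nat -> R) (la lb : R) :
  is_series a la -> is_series b lb -> (forall n, a n <= b n) -> la <= lb.
Proof.
  intros Ha Hb Hab.
  exact (is_lim_seq_le (sum_n a) (sum_n b) la lb (fun n => sum_n_m_le a b 0 n Hab) Ha Hb).
Qed.

Lemma sum_n_spike (u : nat -> R) (L : nat) :
  (forall l, l <> L -> u l = 0) ->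
  forall n, sum_n u n = if (L <=? n)%nat then u L else 0.
Proof.
  intros Hu n. induction n as [|n IH].
  - rewrite sum_O. destruct L; [reflexivity | apply Hu; lia].
  - rewrite sum_Sn, IH. unfold plus; simpl.
    destruct (Nat.leb_spec L n), (Nat.leb_spec L (S n)); try lia.
    + rewrite (Hu (S n)) by lia. ring.
    + replace L with (S n) by lia. ring.
    + rewrite (Hu (S n)) by lia. ring.
Qed.

Lemma is_series_spike (u : nat -> R) (L : nat) :
  (forall l, l <> L -> u l = 0) -> is_series u (u L).
Proof.
  intros Hu. change (is_lim_seq (sum_n u) (u L)).
  apply (is_lim_seq_ext_loc (fun _ => u L)); [|apply is_lim_seq_const].
  exists L. intros n Hn. rewrite (sum_n_spike u L Hu n).
  destruct (Nat.leb_spec L n); [reflexivity | lia].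
Qed.

Definition spike (L : nat) (c : R) (l : nat) : R := if Nat.eq_dec l L then c else 0.

Lemma spike_at (L : nat) (c : R) : spike L c L = c.
Proof. unfold spike. destruct (Nat.eq_dec L L); congruence. Qed.

Lemma spike_off (L : nat) (c : R) (l : nat) : l <> L -> spike L c l = 0.
Proof. unfold spike. destruct (Nat.eq_dec l L); congruence. Qed.

Lemma is_series_term_le (a : nat -> R) (la : R) (k : nat) :
  (forall n, 0 <= a n) -> is_series a la -> a k <= la.
Proof.
  intros Ha Hs. rewrite <- (spike_at k (a k)).
  apply (is_series_le (spike k (a k)) a _ _ (is_series_spike _ k (spike_off k (a k))) Hs).
  intro n. unfold spike. destruct (Nat.eq_dec n k) as [->|_]; [lra | apply Ha].
Qed.

Definition trunc (n0 : nat) (a : nat -> R) (l : nat) : R :=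
  if (l <=? n0)%nat then a l else 0.

Lemma is_series_trunc (a : nat -> R) (n0 : nat) : is_series (trunc n0 a) (sum_n a n0).
Proof.
  assert (Htail : forall k, sum_n (trunc n0 a) (n0 + k) = sum_n a n0).
  { induction k as [|k IH].
    - rewrite Nat.add_0_r. apply sum_n_ext_loc. intros n Hn. unfold trunc.
      destruct (Nat.leb_spec n n0); [reflexivity | lia].
    - rewrite Nat.add_succ_r, sum_Sn, IH. unfold trunc.
      destruct (Nat.leb_spec (S (n0 + k)) n0); [lia | unfold plus; simpl; ring]. }
  change (is_lim_seq (sum_n (trunc n0 a)) (sum_n a n0)).
  apply (is_lim_seq_ext_loc (fun _ => sum_n a n0)); [|apply is_lim_seq_const].
  exists n0. intros n Hn. replace n with (n0 + (n - n0))%nat by lia. symmetry. apply Htail.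
Qed.

(* Sums over [l >= 1]: the entry [qt q Rr 0 = q 0] carries no sign information. *)
Definition from1 (a : nat -> R) (l : nat) : R := match l with O => 0 | S _ => a l end.

Lemma sum_n_m_1 (a : nat -> R) (n : nat) : sum_n_m a 1 n = sum_n (from1 a) n.
Proof.
  induction n as [|n IH].
  - rewrite sum_n_m_zero by lia. rewrite sum_O. reflexivity.
  - rewrite sum_n_Sm by lia. rewrite sum_Sn, IH. reflexivity.
Qed.

Lemma is_lim_seq_sum_n_m_1 (a : nat -> R) :
  (forall l, (1 <= l)%nat -> 0 <= a l) ->
  is_lim_seq (sum_n (from1 a)) (Lim_seq (fun n => sum_n_m a 1 n)).
Proof.
  intros Ha.
  replace (Lim_seq _) with (Lim_seq (sum_n (from1 a)))
    by (apply Lim_seq_ext; intro n; symmetry; apply sum_n_m_1).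
  apply Lim_seq_correct, ex_lim_seq_incr. intro n.
  rewrite sum_Sn. unfold plus; simpl. specialize (Ha (S n) ltac:(lia)). lra.
Qed.

Lemma Lim_seq_sum_n_m_1_ge0 (a : nat -> R) :
  (forall l, (1 <= l)%nat -> 0 <= a l) -> Rbar_le 0 (Lim_seq (fun n => sum_n_m a 1 n)).
Proof.
  intros Ha. apply (is_lim_seq_le (fun _ => 0) (sum_n (from1 a)));
    [| apply is_lim_seq_const | exact (is_lim_seq_sum_n_m_1 a Ha)].
  intro n. pose proof (sum_n_m_le (fun _ => 0) (from1 a) 0 n) as Hle.
  rewrite sum_n_m_const, Rmult_0_r in Hle. apply Hle.
  intros [|k]; [apply Rle_refl | apply Ha; lia].
Qed.

Lemma ln_le_sub_1 (x : R) : 0 < x -> ln x <= x - 1.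
Proof.
  intros Hx. pose proof (exp_ineq1_le (ln x)) as H. rewrite exp_ln in H by exact Hx. lra.
Qed.

Lemma exp_opp_le_1 (x : R) : 0 <= x -> exp (- x) <= 1.
Proof.
  intros [Hx | <-].
  - left. rewrite <- exp_0. apply exp_increasing. lra.
  - rewrite Ropp_0, exp_0. lra.
Qed.

Lemma exp_opp_le_half (x : R) : 0 <= x <= 1 -> exp (- x) <= 1 - x / 2.
Proof.
  intros Hx. rewrite exp_Ropp.
  pose proof (exp_ineq1_le x). pose proof (exp_pos x) as Hpos.
  apply (Rmult_le_reg_r (exp x)); [exact Hpos|]. rewrite Rinv_l by lra. nra.
Qed.

Lemma xlog_0 (c : R) : xlog 0 c = 0.
Proof. unfold xlog. destruct (Req_EM_T 0 0); [reflexivity | lra]. Qed.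

(* Gibbs' inequality [ln y <= y - 1] at [y = c w / x]. *)
Lemma xlog_ge (x c w : R) :
  0 <= x -> 0 < c -> 0 < w -> x - c * w + x * ln w <= xlog x c.
Proof.
  intros Hx Hc Hw. unfold xlog. destruct (Req_EM_T x 0) as [->|Hx0]; [nra|].
  assert (Hxp : 0 < x) by lra.
  pose proof (ln_le_sub_1 (c * w / x) ltac:(apply Rdiv_lt_0_compat; nra)) as H.
  rewrite ln_div, ln_mult in H by nra. rewrite ln_div by lra.
  assert (x * (c * w / x) = c * w) by (field; lra).
  nra.
Qed.

Lemma xlog_le (x c : R) : 0 <= x -> 0 < c -> xlog x c <= x * (x - 1 - ln c).
Proof.
  intros Hx Hc. unfold xlog. destruct (Req_EM_T x 0) as [->|Hx0]; [lra|].
  rewrite ln_div by lra. pose proof (ln_le_sub_1 x ltac:(lra)). nra.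
Qed.

Lemma xlog_abs_le (x c B : R) :
  0 <= x -> 0 < c -> 0 <= B -> x - 1 - ln c <= B -> Rabs (xlog x c) <= c + x * B.
Proof.
  intros Hx Hc HB HxB.
  pose proof (xlog_ge x c 1 Hx Hc Rlt_0_1) as Hlow. pose proof (xlog_le x c Hx Hc) as Hup.
  rewrite ln_1 in Hlow. apply Rabs_le. split; nra.
Qed.

Section NonnegativeX.

Variable z : nat -> R.
Hypothesis hz : in_X0plus z.

Lemma X0plus_0 : z 0%nat = 0.
Proof. apply hz. Qed.

Lemma X0plus_nonneg (l : nat) : 0 <= z l.
Proof. apply hz. Qed.

Lemma is_series_rho : is_series (fun l => INR l * z l) (rho z).
Proof.
  destruct hz as [_ [_ Hex]]. apply Series_correct.
  apply (ex_series_ext (fun l => INR l * Rabs (z l))); [|exact Hex].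
  intro l. rewrite Rabs_pos_eq by apply X0plus_nonneg. reflexivity.
Qed.

Lemma is_series_Nz : is_series z (Nz z).
Proof.
  apply Series_correct, (ex_series_le z (fun l => INR l * z l)); [|eexists; apply is_series_rho].
  intros [|l]; change norm with Rabs; rewrite Rabs_pos_eq by apply X0plus_nonneg.
  - rewrite X0plus_0. simpl. lra.
  - pose proof (X0plus_nonneg (S l)). pose proof (le_INR 1 (S l) ltac:(lia)). simpl in *. nra.
Qed.

Lemma X0plus_le_Nz (l : nat) : z l <= Nz z.
Proof. apply is_series_term_le; [apply X0plus_nonneg | apply is_series_Nz]. Qed.

End NonnegativeX.

Lemma prefix_bounded (f : nat -> R) (n : nat) : exists A, forall l, (l <= n)%nat -> f l <= A.
Proof.
  induction n as [|n [A HA]].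
  - exists (f 0%nat). intros l Hl. replace l with 0%nat by lia. lra.
  - exists (Rmax A (f (S n))). intros l Hl.
    destruct (Nat.eq_dec l (S n)) as [->|Hne]; [apply Rmax_r|].
    eapply Rle_trans; [apply HA; lia | apply Rmax_l].
Qed.

Lemma ln_ge_linear_of_ratio_cvg_1 (a : nat -> R) :
  (forall l, (1 <= l)%nat -> 0 < a l) ->
  is_lim_seq (fun l => a l / a (S l)) 1 ->
  forall eps, 0 < eps -> exists A, forall l, (1 <= l)%nat -> - A - eps * INR l <= ln (a l).
Proof.
  intros Hpos Hratio eps Heps.
  assert (Hev : eventually (fun l => a l / a (S l) < exp eps)).
  { apply (Hratio (fun x => x < exp eps)), (open_Rbar_lt' 1 (exp eps)).
    simpl. pose proof (exp_ineq1_le eps). lra. }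
  destruct Hev as [N0 HN0].
  set (L0 := max N0 1).
  assert (Hstep : forall l, (L0 <= l)%nat -> ln (a l) - eps <= ln (a (S l))).
  { intros l Hl.
    pose proof (Hpos l ltac:(lia)) as Hl1. pose proof (Hpos (S l) ltac:(lia)) as HSl.
    assert (Hlt : a l < exp eps * a (S l)).
    { specialize (HN0 l ltac:(lia)).
      apply (Rmult_lt_compat_r (a (S l))) in HN0; [|exact HSl].
      unfold Rdiv in HN0. rewrite Rmult_assoc, Rinv_l, Rmult_1_r in HN0 by lra. lra. }
    apply ln_increasing in Hlt; [|exact Hl1].
    rewrite ln_mult, ln_exp in Hlt by (try apply exp_pos; lra). lra. }
  destruct (prefix_bounded (fun l => - ln (a l)) L0) as [A HA].
  exists A. intros l. induction l as [|l IH]; intros Hl; [lia|].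
  pose proof (pos_INR l) as Hl0. rewrite S_INR.
  destruct (Compare_dec.le_lt_dec (S l) L0) as [Hle|Hgt].
  - specialize (HA (S l) Hle). simpl in HA. nra.
  - specialize (IH ltac:(lia)). specialize (Hstep l ltac:(lia)). lra.
Qed.

Section Weights.

Variables (q : nat -> R) (Rr : R).
Hypothesis hqpos : forall l, (1 <= l)%nat -> 0 < q l.
Hypothesis hRpos : 0 < Rr.

Lemma qt_pos (l : nat) : (1 <= l)%nat -> 0 < qt q Rr l.
Proof. intros Hl. apply Rmult_lt_0_compat; [auto | apply pow_lt, hRpos]. Qed.

Lemma qt1_nonneg (l : nat) : 0 <= from1 (qt q Rr) l.
Proof. destruct l as [|l]; [apply Rle_refl | apply Rlt_le, qt_pos; lia]. Qed.

Lemma qt_ratio_cvg_1 :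
  is_lim_seq (fun l => q l / q (S l)) Rr -> is_lim_seq (fun l => qt q Rr l / qt q Rr (S l)) 1.
Proof.
  intros HR. apply (is_lim_seq_ext (fun l => q l / q (S l) * / Rr)).
  - intro l. unfold qt. simpl.
    pose proof (hqpos (S l) ltac:(lia)). pose proof (pow_lt Rr l hRpos).
    field. repeat split; lra.
  - replace (Finite 1) with (Rbar_mult Rr (/ Rr)) by (simpl; f_equal; field; lra).
    apply is_lim_seq_scal_r, HR.
Qed.

Lemma ln_qt_ge :
  is_lim_seq (fun l => q l / q (S l)) Rr ->
  forall eps, 0 < eps -> exists A, forall l, (1 <= l)%nat -> - A - eps * INR l <= ln (qt q Rr l).
Proof. intros HR. exact (ln_ge_linear_of_ratio_cvg_1 _ qt_pos (qt_ratio_cvg_1 HR)). Qed.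

Lemma ft1_finite_of_NEQ :
  Rbar_lt (ft1 q Rr) 1 \/ (ft1 q Rr = 1 /\ gt1 q Rr = p_infty) ->
  exists F1, is_series (from1 (qt q Rr)) F1 /\ (F1 < 1 \/ (F1 = 1 /\ gt1 q Rr = p_infty)).
Proof.
  intros HNEQ.
  assert (Hqt : forall l, (1 <= l)%nat -> 0 <= qt q Rr l) by (intros; apply Rlt_le, qt_pos; auto).
  pose proof (is_lim_seq_sum_n_m_1 _ Hqt) as Hlim.
  pose proof (Lim_seq_sum_n_m_1_ge0 _ Hqt) as H0.
  change (Lim_seq _) with (ft1 q Rr) in Hlim, H0.
  destruct (ft1 q Rr) as [F1| |].
  - exists F1. split; [exact Hlim|].
    destruct HNEQ as [H|[H1 H2]]; [left; exact H | right; split; [congruence | exact H2]].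
  - destruct HNEQ as [[]|[H _]]. discriminate.
  - destruct H0.
Qed.

Lemma gt1_unbounded :
  gt1 q Rr = p_infty ->
  forall M, exists n0, (1 <= n0)%nat /\ M <= sum_n_m (fun l => INR l * qt q Rr l) 1 n0.
Proof.
  intros Hg M.
  assert (Hlim := is_lim_seq_sum_n_m_1 (fun l => INR l * qt q Rr l)
    (fun l Hl => Rmult_le_pos _ _ (pos_INR l) (Rlt_le _ _ (qt_pos l Hl)))).
  change (Lim_seq _) with (gt1 q Rr) in Hlim. rewrite Hg in Hlim.
  destruct (proj2 (is_lim_seq_spec _ _) Hlim M) as [N0 HN0].
  exists (max N0 1). split; [lia|]. rewrite sum_n_m_1. left. apply HN0. lia.
Qed.

Lemma tilted_mass_le (F1 t : R) (n0 : nat) :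
  is_series (from1 (qt q Rr)) F1 -> 0 <= t -> t * INR n0 <= 1 ->
  exists S, is_series (fun l => from1 (qt q Rr) l * exp (- (t * INR l))) S /\
    S <= F1 - t / 2 * sum_n_m (fun l => INR l * qt q Rr l) 1 n0.
Proof.
  intros HF1 Ht Htn0.
  set (G := fun l => INR l * qt q Rr l).
  set (tilted := fun l => from1 (qt q Rr) l * exp (- (t * INR l))).
  assert (Hbound : forall l, tilted l <= from1 (qt q Rr) l - t / 2 * trunc n0 (from1 G) l).
  { intros [|l]; unfold tilted, trunc; [destruct (_ <=? _)%nat; simpl; lra|].
    pose proof (qt_pos (S l) ltac:(lia)). pose proof (pos_INR (S l)). simpl from1.
    destruct (Nat.leb_spec (S l) n0) as [Hle|Hgt].
    - pose proof (le_INR _ _ Hle).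
      pose proof (exp_opp_le_half (t * INR (S l)) ltac:(split; nra)). unfold G. nra.
    - pose proof (exp_opp_le_1 (t * INR (S l)) ltac:(nra)). nra. }
  assert (Hex : ex_series tilted).
  { apply (ex_series_le tilted (from1 (qt q Rr))); [|eexists; exact HF1].
    intro l. change norm with Rabs. unfold tilted.
    pose proof (qt1_nonneg l). pose proof (exp_pos (- (t * INR l))).
    pose proof (exp_opp_le_1 (t * INR l) ltac:(pose proof (pos_INR l); nra)).
    rewrite Rabs_pos_eq by nra. nra. }
  assert (Hupper : is_series (fun l => from1 (qt q Rr) l - t / 2 * trunc n0 (from1 G) l)
                     (F1 - t / 2 * sum_n_m G 1 n0)).
  { rewrite sum_n_m_1.
    apply (is_series_minus (from1 (qt q Rr)) (fun l => t / 2 * trunc n0 (from1 G) l)); [exact HF1|].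
    apply (is_series_scal (t / 2) (trunc n0 (from1 G))), is_series_trunc. }
  exists (Series tilted). split; [exact (Series_correct _ Hex)|].
  exact (is_series_le _ _ _ _ (Series_correct _ Hex) Hupper Hbound).
Qed.

End Weights.

Section Entropy.

Variables (q : nat -> R) (Rr : R).
Hypothesis hqpos : forall l, (1 <= l)%nat -> 0 < q l.
Hypothesis hRpos : 0 < Rr.
Hypothesis hR : is_lim_seq (fun l => q l / q (S l)) Rr.
Variable F1 : R.
Hypothesis hF1 : is_series (from1 (qt q Rr)) F1.
Variable z : nat -> R.
Hypothesis hz : in_X0plus z.
Hypothesis hN : 0 < Nz z.

Lemma Atilde_summable : ex_series (fun l => xlog (z l) (qt q Rr l * Nz z)).
Proof.
  destruct (ln_qt_ge q Rr hqpos hRpos hR 1 Rlt_0_1) as [A HA].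
  pose proof hN as HN. set (N := Nz z) in HN |- *.
  set (B := N + Rabs (ln N) + Rabs A).
  apply (ex_series_le (fun l => xlog (z l) (qt q Rr l * N))
           (fun l => N * from1 (qt q Rr) l + B * z l + INR l * z l)).
  - intros [|l]; change norm with Rabs.
    { rewrite (X0plus_0 z hz), xlog_0, Rabs_R0. simpl. lra. }
    pose proof (qt_pos q Rr hqpos hRpos (S l) ltac:(lia)) as Hq.
    pose proof (X0plus_nonneg z hz (S l)) as Hz.
    pose proof (X0plus_le_Nz z hz (S l)) as HzN. fold N in HzN.
    specialize (HA (S l) ltac:(lia)).
    pose proof (Rle_abs A). pose proof (Rle_abs (- ln N)). rewrite Rabs_Ropp in *.
    pose proof (Rabs_pos A). pose proof (Rabs_pos (ln N)). pose proof (pos_INR (S l)).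
    pose proof (xlog_abs_le (z (S l)) (qt q Rr (S l) * N) (B + INR (S l)) Hz
                  ltac:(nra) ltac:(unfold B; lra)
                  ltac:(rewrite ln_mult by lra; unfold B; lra)).
    simpl from1. nra.
  - exists (N * F1 + B * N + rho z).
    apply (is_series_plus (fun l => N * from1 (qt q Rr) l + B * z l) (fun l => INR l * z l));
      [|exact (is_series_rho z hz)].
    apply (is_series_plus (fun l => N * from1 (qt q Rr) l) (fun l => B * z l)).
    + exact (is_series_scal N _ _ hF1).
    + exact (is_series_scal B _ _ (is_series_Nz z hz)).
Qed.

Lemma Atilde_ge_gibbs (w : nat -> R) (M E : R) :
  (forall l, 0 < w l) ->
  is_series (fun l => from1 (qt q Rr) l * w l) M ->
  is_series (fun l => z l * ln (w l)) E ->
  Nz z - Nz z * M + E <= Atilde q Rr z.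
Proof.
  intros Hw HM HE.
  apply (is_series_le (fun l => z l - Nz z * (from1 (qt q Rr) l * w l) + z l * ln (w l))
                      (fun l => xlog (z l) (qt q Rr l * Nz z))).
  - apply (is_series_plus (fun l => z l - Nz z * (from1 (qt q Rr) l * w l))
                          (fun l => z l * ln (w l))); [|exact HE].
    apply (is_series_minus z (fun l => Nz z * (from1 (qt q Rr) l * w l))).
    + exact (is_series_Nz z hz).
    + exact (is_series_scal (Nz z) _ _ HM).
  - exact (Series_correct _ Atilde_summable).
  - intros [|l].
    + rewrite (X0plus_0 z hz), xlog_0. simpl. lra.
    + simpl from1. pose proof (qt_pos q Rr hqpos hRpos (S l) ltac:(lia)).
      replace (Nz z * (qt q Rr (S l) * w (S l))) with (qt q Rr (S l) * Nz z * w (S l)) by ring.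
      apply xlog_ge; [apply (X0plus_nonneg z hz) | nra | apply Hw].
Qed.

Lemma Atilde_ge_tilt (t : R) (n0 : nat) :
  0 <= t -> t * INR n0 <= 1 ->
  Nz z * (1 - F1) + t * (Nz z / 2 * sum_n_m (fun l => INR l * qt q Rr l) 1 n0 - rho z)
    <= Atilde q Rr z.
Proof.
  intros Ht Htn0.
  destruct (tilted_mass_le q Rr hqpos hRpos F1 t n0 hF1 Ht Htn0) as [M [HM HMle]].
  assert (HE : is_series (fun l => z l * ln (exp (- (t * INR l)))) (- t * rho z)).
  { apply (is_series_ext (fun l => - t * (INR l * z l))).
    - intro l. rewrite ln_exp. simpl. ring.
    - exact (is_series_scal (- t) _ _ (is_series_rho z hz)). }
  pose proof (Atilde_ge_gibbs _ M _ (fun l => exp_pos _) HM HE). nra.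
Qed.

End Entropy.

Lemma Atilde_ge_of_Nz_ge (q : nat -> R) (Rr : R)
  (hqpos : forall l, (1 <= l)%nat -> 0 < q l)
  (hRpos : 0 < Rr)
  (hR : is_lim_seq (fun l => q l / q (S l)) Rr)
  (hNEQ : Rbar_lt (ft1 q Rr) 1 \/ (ft1 q Rr = 1 /\ gt1 q Rr = p_infty))
  (rhostar : R) (hrho : 0 < rhostar) (eps : R) (heps : 0 < eps) :
  exists delta, 0 < delta /\ forall w, in_X0plus w -> rho w = rhostar -> eps <= Nz w ->
    delta <= Atilde q Rr w.
Proof.
  destruct (ft1_finite_of_NEQ q Rr hqpos hRpos hNEQ) as [F1 [HF1 [Hlt | [-> Hg]]]].
  - exists (eps * (1 - F1)). split; [nra|]. intros w Hw _ HN.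
    pose proof (Atilde_ge_tilt q Rr hqpos hRpos hR F1 HF1 w Hw ltac:(lra) 0 0
                  (Rle_refl 0) ltac:(simpl; lra)).
    nra.
  - destruct (gt1_unbounded q Rr hqpos hRpos Hg (4 * rhostar / eps)) as [n0 [Hn0 HG]].
    pose proof (le_INR 1 n0 Hn0) as Hn0'. simpl in Hn0'.
    set (t := / INR n0).
    assert (Ht : 0 < t) by (apply Rinv_0_lt_compat; lra).
    assert (Htn0 : t * INR n0 = 1) by (apply Rinv_l; lra).
    exists (t * rhostar). split; [nra|]. intros w Hw Hrhow HN.
    pose proof (Atilde_ge_tilt q Rr hqpos hRpos hR 1 HF1 w Hw ltac:(lra) t n0
                  ltac:(lra) ltac:(lra)) as Hge.
    rewrite Hrhow in Hge.
    set (G := sum_n_m _ 1 n0) in *.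
    assert (HepsG : 4 * rhostar <= eps * G).
    { replace (4 * rhostar) with (eps * (4 * rhostar / eps)) by (field; lra).
      apply Rmult_le_compat_l; lra. }
    assert (HNG : 4 * rhostar <= Nz w * G) by nra.
    nra.
Qed.

Lemma spike_in_X0plus (L : nat) (c : R) : (1 <= L)%nat -> 0 <= c -> in_X0plus (spike L c).
Proof.
  intros HL Hc. split; [apply spike_off; lia | split].
  - intro l. unfold spike. destruct (Nat.eq_dec l L); lra.
  - eexists. apply is_series_spike. intros l Hl. rewrite spike_off, Rabs_R0 by exact Hl. ring.
Qed.

Lemma rho_spike (L : nat) (c : R) : rho (spike L c) = INR L * c.
Proof.
  rewrite <- (spike_at L c) at 2.
  apply is_series_unique, (is_series_spike (fun l => INR l * spike L c l)).
  intros l Hl. rewrite spike_off by exact Hl. ring.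
Qed.

Lemma Nz_spike (L : nat) (c : R) : Nz (spike L c) = c.
Proof.
  rewrite <- (spike_at L c) at 2. apply is_series_unique, is_series_spike, spike_off.
Qed.

Lemma Atilde_spike (q : nat -> R) (Rr : R) (L : nat) (c : R) :
  0 < qt q Rr L -> 0 < c -> Atilde q Rr (spike L c) = - c * ln (qt q Rr L).
Proof.
  intros Hq Hc. unfold Atilde. rewrite Nz_spike.
  assert (Hs : is_series (fun l => xlog (spike L c l) (qt q Rr l * c))
                         (xlog (spike L c L) (qt q Rr L * c))).
  { apply (is_series_spike (fun l => xlog (spike L c l) (qt q Rr l * c))).
    intros l Hl. rewrite spike_off by exact Hl. apply xlog_0. }
  rewrite (is_series_unique _ _ Hs), spike_at. unfold xlog. destruct (Req_EM_T c 0) as [E|_]; [lra|].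
  replace (c / (qt q Rr L * c)) with (/ qt q Rr L) by (field; lra).
  rewrite ln_Rinv by exact Hq. ring.
Qed.

Definition Atilde_values (q : nat -> R) (Rr rhostar : R) (a : R) : Prop :=
  exists w, in_X0plus w /\ rho w = rhostar /\ a = Atilde q Rr w.

Lemma Glb_Atilde_lt (q : nat -> R) (Rr : R)
  (hqpos : forall l, (1 <= l)%nat -> 0 < q l)
  (hRpos : 0 < Rr)
  (hR : is_lim_seq (fun l => q l / q (S l)) Rr)
  (rhostar : R) (hrho : 0 < rhostar) (d : R) (hd : 0 < d) :
  Rbar_lt (Glb_Rbar (Atilde_values q Rr rhostar)) d.
Proof.
  destruct (ln_qt_ge q Rr hqpos hRpos hR (d / (2 * rhostar))
              ltac:(apply Rdiv_lt_0_compat; lra)) as [A HA].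
  destruct (nfloor_ex (Rabs (2 * rhostar * A / d)) (Rabs_pos _)) as [n [_ Hn]].
  set (L := S n).
  assert (HL : INR L = INR n + 1) by apply S_INR.
  pose proof (pos_INR n).
  set (c := rhostar / INR L).
  assert (Hc : 0 < c) by (apply Rdiv_lt_0_compat; lra).
  pose proof (qt_pos q Rr hqpos hRpos L ltac:(unfold L; lia)) as Hq.
  apply (Rbar_le_lt_trans _ (Atilde q Rr (spike L c))).
  - apply (proj1 (Glb_Rbar_correct _)). exists (spike L c).
    split; [apply spike_in_X0plus; [unfold L; lia | lra]|].
    split; [|reflexivity]. rewrite rho_spike. unfold c. field. lra.
  - simpl. rewrite Atilde_spike by assumption.
    specialize (HA L ltac:(unfold L; lia)).
    pose proof (Rle_abs (2 * rhostar * A / d)).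
    assert (HAL : 2 * rhostar * A < d * INR L).
    { replace (2 * rhostar * A) with (d * (2 * rhostar * A / d)) by (field; lra).
      apply Rmult_lt_compat_l; lra. }
    assert (Hcd : c * (d / (2 * rhostar) * INR L) = d / 2) by (unfold c; field; lra).
    assert (HcA : c * A < d / 2).
    { unfold c. apply (Rmult_lt_reg_r (INR L)); [lra|].
      replace (rhostar / INR L * A * INR L) with (rhostar * A) by (field; lra). lra. }
    nra.
Qed.

Theorem corollary14
  (q : nat -> R) (Rr : R)
  (hqpos : forall l : nat, (1 <= l)%nat -> 0 < q l)
  (hq1 : q 1%nat = 1)
  (hR : is_lim_seq (fun l : nat => q l / q (S l)) (Finite Rr))
  (hRpos : 0 < Rr)
  (hNEQ : Rbar_lt (ft1 q Rr) (Finite 1)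
          \/ (ft1 q Rr = Finite 1 /\ gt1 q Rr = p_infty))
  (rhostar : R) (hrho : 0 < rhostar)
  (z : nat -> nat -> R)
  (hzX : forall m : nat, in_X0plus (z m))
  (hzrho : forall m : nat, rho (z m) = rhostar)
  (hmin : is_lim_seq (fun m : nat => Atilde q Rr (z m))
            (Glb_Rbar (fun a : R => exists w : nat -> R,
               in_X0plus w /\ rho w = rhostar /\ a = Atilde q Rr w))) :
  forall l : nat, (1 <= l)%nat -> is_lim_seq (fun m : nat => z m l) (Finite 0).
Proof.
  intros l _. apply is_lim_seq_spec. intros eps.
  destruct (Atilde_ge_of_Nz_ge q Rr hqpos hRpos hR hNEQ rhostar hrho eps (cond_pos eps))
    as [delta [Hdelta Hge]].
  assert (Hsmall : eventually (fun m => Atilde q Rr (z m) < delta)).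
  { apply (hmin (fun x => x < delta)), (open_Rbar_lt' _ delta), Glb_Atilde_lt; assumption. }
  destruct Hsmall as [N0 HN0]. exists N0. intros m Hm.
  rewrite Rminus_0_r, Rabs_pos_eq by apply (X0plus_nonneg _ (hzX m)).
  apply Rnot_le_lt. intros Heps.
  pose proof (Hge (z m) (hzX m) (hzrho m) (Rle_trans _ _ _ Heps (X0plus_le_Nz _ (hzX m) l))).
  specialize (HN0 m Hm). lra.
Qed.
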